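(* There is an existential formula $\phi(X,Y,Z)$ in the signature of $\mathcal{L}(I)$ such that for all finite subsets $A,B,C$ of $I$, $\mathcal{L}(I)\models\phi(A,B,C)$ if and only if $\mathrm{ips}(A,B)=C$.
   Context: Let $I$ be a dense linear order with left endpoint $0$ and no right endpoint. Let $\mathcal{P}_{\mathrm{fci}}(I)$ be the set of finite unions of closed intervals $[i,j]$, $[i,+\infty)$, $(-\infty,j]$ of $I$. $\mathcal{L}(I)$ is the structure with universe $\mathcal{P}_{\mathrm{fci}}(I)$ in the signature $\{\cup,\cap,\bot,c_0,\min,\max,l,r\}$, interpreted as follows. - $\cup$ and $\cap$ are union and intersection. - $\bot$ is $\emptyset$, and $c_0$ is $\{0\}$. - $\min(A)$ is the singleton of the least element of $A$, with $\min(\emptyset)=\emptyset$. - $\max(A)$ is the singleton of the greatest element when $A$ is nonempty and bounded, and $\emptyset$ otherwise. - $l(A)$ and $r(A)$ are the sets of left and right endpoints of $A$. Left endpoints are the minima of the maximal closed intervals composing $A$. Right endpoints are the maxima of the bounded ones. For finite $A,B$, $\mathrm{ips}(A,B)=\{i\in A: s_A(i)\in B\}$, where $s_A$ is the successor function of $A$ with the induced order. *)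

From Stdlib Require Import List.

Section LI.
Context {T : Type} (lt : T -> T -> Prop).

Definition le (x y : T) : Prop := lt x y \/ x = y.

Definition strict_total_order : Prop :=
  (forall x, ~ lt x x) /\
  (forall x y z, lt x y -> lt y z -> lt x z) /\
  (forall x y, lt x y \/ x = y \/ lt y x).

Definition dense_order : Prop :=
  forall x y, lt x y -> exists z, lt x z /\ lt z y.

Definition least_element (z : T) : Prop := forall x, le z x.

Definition no_right_endpoint : Prop := forall x, exists y, lt x y.

Definition seteq (A B : T -> Prop) : Prop := forall x, A x <-> B x.

Definition finite_set (A : T -> Prop) : Prop :=
  exists s : list T, forall x, A x <-> In x s.

Inductive cinterval : Type :=
  | Icc (i j : T)
  | Ici (i : T)
  | Iic (j : T).

Definition ivl (J : cinterval) : T -> Prop :=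
  match J with
  | Icc i j => fun x => le i x /\ le x j
  | Ici i => fun x => le i x
  | Iic j => fun x => le x j
  end.

Definition fci (A : T -> Prop) : Prop :=
  exists s : list cinterval, forall x, A x <-> exists J, In J s /\ ivl J x.

Definition is_min (A : T -> Prop) (x : T) : Prop := A x /\ forall y, A y -> le x y.
Definition is_max (A : T -> Prop) (x : T) : Prop := A x /\ forall y, A y -> le y x.

Definition max_ci (A : T -> Prop) (J : cinterval) : Prop :=
  (forall x, ivl J x -> A x) /\
  (forall J', (forall x, ivl J x -> ivl J' x) -> (forall x, ivl J' x -> A x) ->
              forall x, ivl J' x -> ivl J x).

Definition bounded_ci (J : cinterval) : Prop :=
  exists b, forall x, ivl J x -> le x b.

Definition op_cup (A B : T -> Prop) : T -> Prop := fun x => A x \/ B x.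
Definition op_cap (A B : T -> Prop) : T -> Prop := fun x => A x /\ B x.
Definition op_bot : T -> Prop := fun _ => False.
Definition op_c0 (zero : T) : T -> Prop := fun x => x = zero.
Definition op_min (A : T -> Prop) : T -> Prop := fun x => is_min A x.
Definition op_max (A : T -> Prop) : T -> Prop :=
  fun x => (exists b, forall y, A y -> le y b) /\ is_max A x.
Definition op_l (A : T -> Prop) : T -> Prop :=
  fun x => exists J, max_ci A J /\ is_min (ivl J) x.
Definition op_r (A : T -> Prop) : T -> Prop :=
  fun x => exists J, max_ci A J /\ bounded_ci J /\ is_max (ivl J) x.

(* successor-based ips(A,B) = { i in A : s_A(i) in B } *)
Definition ips (A B : T -> Prop) : T -> Prop :=
  fun i => A i /\ exists j, A j /\ lt i j /\ (forall k, A k -> lt i k -> le j k) /\ B j.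

End LI.

Inductive term : Type :=
  | TVar (n : nat)
  | TCup (t1 t2 : term)
  | TCap (t1 t2 : term)
  | TBot
  | TC0
  | TMin (t : term)
  | TMax (t : term)
  | TL (t : term)
  | TR (t : term).

Inductive qfformula : Type :=
  | FEq (t1 t2 : term)
  | FNot (f : qfformula)
  | FAnd (f1 f2 : qfformula)
  | FOr (f1 f2 : qfformula).

Inductive exformula : Type :=
  | EQF (f : qfformula)
  | EEx (n : nat) (f : exformula).

Section Sem.
Context {T : Type} (lt : T -> T -> Prop) (zero : T).

Fixpoint eval_term (env : nat -> T -> Prop) (t : term) : T -> Prop :=
  match t with
  | TVar n => env n
  | TCup t1 t2 => op_cup (eval_term env t1) (eval_term env t2)
  | TCap t1 t2 => op_cap (eval_term env t1) (eval_term env t2)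
  | TBot => op_bot
  | TC0 => op_c0 zero
  | TMin t => op_min lt (eval_term env t)
  | TMax t => op_max lt (eval_term env t)
  | TL t => op_l lt (eval_term env t)
  | TR t => op_r lt (eval_term env t)
  end.

Fixpoint sat_qf (env : nat -> T -> Prop) (f : qfformula) : Prop :=
  match f with
  | FEq t1 t2 => seteq (eval_term env t1) (eval_term env t2)
  | FNot f => ~ sat_qf env f
  | FAnd f1 f2 => sat_qf env f1 /\ sat_qf env f2
  | FOr f1 f2 => sat_qf env f1 \/ sat_qf env f2
  end.

Definition update (env : nat -> T -> Prop) (n : nat) (S : T -> Prop) : nat -> T -> Prop :=
  fun m => if Nat.eqb m n then S else env m.

Fixpoint sat_ex (env : nat -> T -> Prop) (f : exformula) : Prop :=
  match f with
  | EQF g => sat_qf env g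
  | EEx n g => exists S, fci lt S /\ sat_ex (update env n S) g
  end.

End Sem.

(* Between each point a of the finite set A and its successor s choose a midpoint m.
   U, the union of the intervals [a, m], and V, the union of the [m, s], together with
   their sub-unions P and Q over the pairs with s in B, are finite unions of pairwise
   separated closed intervals; so their maximal intervals are exactly these [a, m] and
   [m, s], the operations l and r return their ends, and U, V, P, Q satisfy the
   equations of [ips_formula] when C = ips(A, B).
   Conversely, in any solution of the equations, the maximal interval of U starting at a
   non-maximal a in A ends at a point outside A, where a maximal interval of V starts
   that runs exactly to the successor of a; the maximal intervals of P inside U and of
   Q inside V then link each point of C to a successor lying in B, and back. *)

From Stdlib Require Import List Classical ClassicalEpsilon.

Lemma exists_filter {X : Type} (l : list X) (P : X -> Prop) :
  exists l', forall x, In x l' <-> In x l /\ P x.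
Proof.
  exists (filter (fun x => if excluded_middle_informative (P x) then true else false) l).
  intro x. rewrite filter_In.
  destruct (excluded_middle_informative (P x)); intuition discriminate.
Qed.

Local Notation vA := (TVar 0).
Local Notation vB := (TVar 1).
Local Notation vC := (TVar 2).
Local Notation vU := (TVar 3).
Local Notation vV := (TVar 4).
Local Notation vP := (TVar 5).
Local Notation vQ := (TVar 6).

Definition ips_formula : exformula :=
  EEx 3 (EEx 4 (EEx 5 (EEx 6 (EQF
    (FAnd (FEq vA (TCup (TL vU) (TMax vA)))
    (FAnd (FEq (TCap vU vA) (TL vU))
    (FAnd (FEq (TCap (TR vU) vA) TBot)
    (FAnd (FEq (TL vV) (TR vU))
    (FAnd (FEq (TCap vV vA) (TR vV))
    (FAnd (FEq (TCap vC vA) vC)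
    (FAnd (FEq (TL vP) vC)
    (FAnd (FEq (TCap vP vU) vP)
    (FAnd (FEq (TR vP) (TL vQ))
    (FAnd (FEq (TCap vQ vV) vQ)
    (FAnd (FEq (TR vQ) (TCap vB (TR vV)))
    (FAnd (FEq (TCap (TR vP) (TR vU)) (TR vP))
          (FEq (TCap vC (TMax vA)) TBot))))))))))))))))).

Section DenseOrder.
Context {T : Type} (lt : T -> T -> Prop) (zero : T)
  (Hord : strict_total_order lt) (Hdense : dense_order lt)
  (Hzero : least_element lt zero) (Hnoright : no_right_endpoint lt).

Local Infix "<" := lt.
Local Infix "<=" := (le lt).
Local Notation "x < y < z" := (x < y /\ y < z).
Local Notation "x <= y <= z" := (x <= y /\ y <= z).

Lemma lt_irrefl x : ~ x < x.
Proof. apply (proj1 Hord). Qed.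

Lemma lt_trans x y z : x < y -> y < z -> x < z.
Proof. apply (proj1 (proj2 Hord)). Qed.

Lemma lt_trichotomy x y : x < y \/ x = y \/ y < x.
Proof. apply (proj2 (proj2 Hord)). Qed.

Lemma le_refl x : x <= x.
Proof. now right. Qed.

Lemma lt_le x y : x < y -> x <= y.
Proof. now left. Qed.

Local Hint Resolve le_refl lt_le : core.

Lemma le_trans x y z : x <= y -> y <= z -> x <= z.
Proof. intros [h | <-] [g | <-]; eauto using lt_trans. Qed.

Lemma lt_le_trans x y z : x < y -> y <= z -> x < z.
Proof. intros h [g | <-]; eauto using lt_trans. Qed.

Lemma le_lt_trans x y z : x <= y -> y < z -> x < z.
Proof. intros [h | <-] g; eauto using lt_trans. Qed.

Lemma le_not_lt x y : x <= y -> ~ y < x.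
Proof. intros h g. exact (lt_irrefl x (le_lt_trans x y x h g)). Qed.

Lemma not_lt_le x y : ~ x < y -> y <= x.
Proof. destruct (lt_trichotomy x y) as [h | [<- | h]]; auto; contradiction. Qed.

Lemma le_antisym x y : x <= y -> y <= x -> x = y.
Proof. intros [h | <-] g; [exfalso; exact (le_not_lt y x g h) | reflexivity]. Qed.

Lemma ivl_convex J a b z : ivl lt J a -> ivl lt J b -> a <= z -> z <= b -> ivl lt J z.
Proof. destruct J; simpl; intuition eauto using le_trans. Qed.

Lemma ivl_from_min J x : is_min lt (ivl lt J) x ->
  (exists y, x <= y /\ forall z, ivl lt J z <-> x <= z <= y) \/
  (forall z, ivl lt J z <-> x <= z).
Proof.
  intros [hx hmin]. destruct J as [i j | i | j]; simpl in *.
  - assert (x = i) as ->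
      by (apply le_antisym; [apply hmin; split | ]; intuition eauto using le_trans).
    left. exists j. split; [tauto | reflexivity].
  - assert (x = i) as -> by (apply le_antisym; auto).
    right. reflexivity.
  - left. exists j. split; [exact hx | intro z; split; [auto | tauto]].
Qed.

Lemma ivl_to_max J y : is_max lt (ivl lt J) y ->
  exists x, x <= y /\ forall z, ivl lt J z <-> x <= z <= y.
Proof.
  intros [hy hmax]. destruct J as [i j | i | j]; simpl in *.
  - assert (y = j) as ->
      by (apply le_antisym; [ | apply hmax; split]; intuition eauto using le_trans).
    exists i. split; [tauto | reflexivity].
  - exfalso. destruct (Hnoright y) as [w hw].
    exact (le_not_lt w y (hmax w (le_trans _ _ _ hy (lt_le _ _ hw))) hw).
  - assert (y = j) as -> by (apply le_antisym; auto).
    exists zero. split; [apply Hzero |].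
    intro z. split; [intro hz; split; [apply Hzero | exact hz] | tauto].
Qed.

Definition covers (S : T -> Prop) x y : Prop := forall z, x <= z -> z <= y -> S z.
Definition left_edge (S : T -> Prop) x : Prop := forall p, p < x -> ~ covers S p x.
Definition right_edge (S : T -> Prop) y : Prop := forall p, y < p -> ~ covers S y p.

Record component (S : T -> Prop) x y : Prop := {
  component_le : x <= y;
  component_covers : covers S x y;
  component_left : left_edge S x;
  component_right : right_edge S y
}.
Arguments component_le {S x y}.
Arguments component_covers {S x y}.
Arguments component_left {S x y}.
Arguments component_right {S x y}.

Lemma covers_incl (S S' : T -> Prop) x y :
  (forall z, S z -> S' z) -> covers S x y -> covers S' x y.
Proof. intros hS hcov z h1 h2. apply hS, hcov; assumption. Qed.

Lemma left_edge_le S x y x' : covers S x y -> left_edge S x' -> x' <= y -> x' <= x.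
Proof.
  intros hcov hedge hx'y. apply not_lt_le. intro hlt.
  apply (hedge x hlt). intros z h1 h2. apply hcov; eauto using le_trans.
Qed.

Lemma right_edge_ge S x y y' : covers S x y -> right_edge S y' -> x <= y' -> y <= y'.
Proof.
  intros hcov hedge hxy'. apply not_lt_le. intro hlt.
  apply (hedge y hlt). intros z h1 h2. apply hcov; eauto using le_trans.
Qed.

Lemma max_ci_component S J x y : max_ci lt S J -> x <= y ->
  (forall z, ivl lt J z <-> x <= z <= y) -> component S x y.
Proof.
  intros [hJS hmax] hxy hJ.
  assert (hcov : covers S x y) by (intros z h1 h2; apply hJS, hJ; auto).
  constructor; [exact hxy | exact hcov | |].
  - intros p hp hpcov.
    assert (hpJ : ivl lt J p).
    { apply (hmax (Icc p y)); simpl.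
      - intros z hz. apply hJ in hz. destruct hz. split; eauto using le_trans.
      - intros z [h1 h2]. destruct (classic (z < x)).
        + apply hpcov; auto.
        + apply hcov; auto using not_lt_le.
      - split; eauto using le_trans. }
    exact (le_not_lt x p (proj1 (proj1 (hJ p) hpJ)) hp).
  - intros p hp hpcov.
    assert (hpJ : ivl lt J p).
    { apply (hmax (Icc x p)); simpl.
      - intros z hz. apply hJ in hz. destruct hz. split; eauto using le_trans.
      - intros z [h1 h2]. destruct (classic (y < z)).
        + apply hpcov; auto.
        + apply hcov; auto using not_lt_le.
      - split; eauto using le_trans. }
    exact (le_not_lt p y (proj2 (proj1 (hJ p) hpJ)) hp).
Qed.

Lemma max_ci_ray_left_edge S J x : max_ci lt S J ->
  (forall z, ivl lt J z <-> x <= z) -> left_edge S x.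
Proof.
  intros [hJS hmax] hJ p hp hpcov.
  assert (hpJ : ivl lt J p).
  { apply (hmax (Ici p)); simpl.
    - intros z hz. apply hJ in hz. eauto using le_trans.
    - intros z hz. destruct (classic (z < x)).
      + apply hpcov; auto.
      + apply hJS, hJ, not_lt_le; assumption.
    - apply le_refl. }
  exact (le_not_lt x p (proj1 (hJ p) hpJ) hp).
Qed.

Lemma component_max_ci S x y : component S x y -> max_ci lt S (Icc x y).
Proof.
  intros [hxy hcov hl hr]. split; [intros z []; apply hcov; assumption |].
  intros J hJ hJS z hz. simpl.
  assert (hx : ivl lt J x) by (apply hJ; simpl; auto).
  assert (hy : ivl lt J y) by (apply hJ; simpl; auto).
  split; apply not_lt_le; intro hlt.
  - apply (hl z hlt). intros w h1 h2. apply hJS, (ivl_convex J z x); assumption.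
  - apply (hr z hlt). intros w h1 h2. apply hJS, (ivl_convex J y z); assumption.
Qed.

Lemma component_op_l S x y : component S x y -> op_l lt S x.
Proof.
  intros hc. exists (Icc x y). split; [exact (component_max_ci S x y hc) |].
  split; [simpl; split; [apply le_refl | exact (component_le hc)] | intros z []; assumption].
Qed.

Lemma component_op_r S x y : component S x y -> op_r lt S y.
Proof.
  intros hc. exists (Icc x y). split; [exact (component_max_ci S x y hc) |].
  split; [exists y; intros z []; assumption |].
  split; [simpl; split; [exact (component_le hc) | apply le_refl] | intros z []; assumption].
Qed.

Lemma op_l_cases S x : op_l lt S x ->
  (exists y, component S x y) \/ (left_edge S x /\ forall z, x <= z -> S z).
Proof.
  intros [J [hJ hmin]].
  destruct (ivl_from_min J x hmin) as [[y [hxy hiff]] | hiff].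
  - left. exists y. exact (max_ci_component S J x y hJ hxy hiff).
  - right. split; [exact (max_ci_ray_left_edge S J x hJ hiff) |].
    intros z hz. apply (proj1 hJ), hiff, hz.
Qed.

Lemma op_r_component S y : op_r lt S y -> exists x, component S x y.
Proof.
  intros [J [hJ [_ hmax]]]. destruct (ivl_to_max J y hmax) as [x [hxy hiff]].
  exists x. exact (max_ci_component S J x y hJ hxy hiff).
Qed.

Lemma op_l_edge S x : op_l lt S x -> S x /\ left_edge S x.
Proof.
  intros hx. split; [destruct hx as [J [[hJS _] [hxJ _]]]; exact (hJS x hxJ) |].
  destruct (op_l_cases S x hx) as [[y hy] | [hedge _]]; [exact (component_left hy) | exact hedge].
Qed.

Lemma op_r_edge S y : op_r lt S y -> S y /\ right_edge S y.
Proof.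
  intros hy. split; [destruct hy as [J [[hJS _] [_ [hyJ _]]]]; exact (hJS y hyJ) |].
  destruct (op_r_component S y hy) as [x hx]. exact (component_right hx).
Qed.

Lemma op_l_in_covers S x y w : covers S x y -> op_l lt S w -> x <= w <= y -> w = x.
Proof.
  intros hcov hw [hxw hwy].
  apply le_antisym; [exact (left_edge_le S x y w hcov (proj2 (op_l_edge S w hw)) hwy) | exact hxw].
Qed.

Lemma op_r_in_covers S x y w : covers S x y -> op_r lt S w -> x <= w <= y -> w = y.
Proof.
  intros hcov hw [hxw hwy].
  apply le_antisym; [exact hwy | exact (right_edge_ge S x y w hcov (proj2 (op_r_edge S w hw)) hxw)].
Qed.

Lemma op_l_component S x p : op_l lt S x -> ~ covers S x p ->
  exists y, component S x y /\ y < p.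
Proof.
  intros hx hnot. destruct (op_l_cases S x hx) as [[y hy] | [_ hray]].
  - exists y. split; [exact hy |]. apply NNPP. intro hyp. apply hnot.
    intros z h1 h2. apply (component_covers hy); eauto using le_trans, not_lt_le.
  - exfalso. apply hnot. intros z h1 _. exact (hray z h1).
Qed.

Lemma nested_component_right S S' x y x' y' : (forall z, S z -> S' z) ->
  component S x y -> component S' x' y' -> x' <= x <= y' -> op_r lt S' y -> y = y'.
Proof.
  intros hSS' hc hc' [hx'x hxy'] hy.
  apply (op_r_in_covers S' x' y' y (component_covers hc') hy).
  split; [exact (le_trans _ _ _ hx'x (component_le hc)) |].
  exact (right_edge_ge S' x y y' (covers_incl S S' x y hSS' (component_covers hc))
           (component_right hc') hxy').
Qed.

Lemma nested_component_left S S' x y x' y' : (forall z, S z -> S' z) ->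
  component S x y -> component S' x' y' -> x' <= y <= y' -> op_l lt S' x -> x = x'.
Proof.
  intros hSS' hc hc' [hx'y hyy'] hx.
  apply (op_l_in_covers S' x' y' x (component_covers hc') hx).
  split; [| exact (le_trans _ _ _ (component_le hc) hyy')].
  exact (left_edge_le S' x y x' (covers_incl S S' x y hSS' (component_covers hc))
           (component_left hc') hx'y).
Qed.

Definition succ_of (A : T -> Prop) a s : Prop :=
  A a /\ A s /\ a < s /\ forall k, A k -> a < k -> s <= k.

Lemma ips_succ A B a : ips lt A B a <-> exists s, succ_of A a s /\ B s.
Proof. unfold ips, succ_of. firstorder. Qed.

Lemma succ_of_lt A a s : succ_of A a s -> a < s.
Proof. intros (_ & _ & h & _). exact h. Qed.

Lemma succ_of_eq_left A a s x : succ_of A a s -> A x -> a <= x -> x < s -> x = a.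
Proof.
  intros (_ & _ & _ & hmin) hx [hax | <-] hxs; [exfalso | reflexivity].
  exact (le_not_lt s x (hmin x hx hax) hxs).
Qed.

Lemma succ_of_eq_right A a s x : succ_of A a s -> A x -> a < x -> x <= s -> x = s.
Proof. intros (_ & _ & _ & hmin) hx hax hxs. exact (le_antisym x s hxs (hmin x hx hax)). Qed.

Lemma succ_of_sep A a s a' s' : succ_of A a s -> succ_of A a' s' ->
  (a = a' /\ s = s') \/ s <= a' \/ s' <= a.
Proof.
  intros (ha & hs & has & hmin) (ha' & hs' & has' & hmin').
  destruct (lt_trichotomy a a') as [h | [<- | h]].
  - right; left. exact (hmin a' ha' h).
  - left. split; [reflexivity | exact (le_antisym s s' (hmin s' hs' has') (hmin' s hs has))].
  - right; right. exact (hmin' a ha h).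
Qed.

Lemma succ_not_max A a s : succ_of A a s -> ~ op_max lt A a.
Proof. intros (_ & hs & has & _) (_ & _ & hmax). exact (le_not_lt s a (hmax s hs) has). Qed.

Lemma least_above A x y : finite_set A -> A y -> x < y ->
  exists s, A s /\ x < s /\ forall k, A k -> x < k -> s <= k.
Proof.
  intros [l hl] hy hxy.
  enough (hlist : forall l', (exists y, In y l' /\ x < y) ->
            exists s, In s l' /\ x < s /\ forall k, In k l' -> x < k -> s <= k).
  { destruct (hlist l) as (s & hs & hxs & hmin); [exists y; split; [apply hl |]; assumption |].
    exists s. split; [apply hl, hs | split; [exact hxs |]].
    intros k hk. apply hmin, hl, hk. }
  induction l' as [| a l' IH]; intros (y' & hy' & hxy'); [destruct hy' |].
  destruct (classic (exists y, In y l' /\ x < y)) as [hex | hnone].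
  - destruct (IH hex) as (s & hs & hxs & hmin).
    destruct (classic (x < a /\ a < s)) as [[hxa has] | hnot].
    + exists a. split; [now left | split; [exact hxa |]].
      intros k [<- | hk] hxk; [apply le_refl |].
      exact (lt_le _ _ (lt_le_trans a s k has (hmin k hk hxk))).
    + exists s. split; [now right | split; [exact hxs |]].
      intros k [<- | hk] hxk; [| exact (hmin k hk hxk)].
      apply not_lt_le. intro hks. exact (hnot (conj hxk hks)).
  - destruct hy' as [<- | hy']; [| exfalso; apply hnone; exists y'; split; assumption].
    exists a. split; [now left | split; [exact hxy' |]].
    intros k [<- | hk] hxk; [apply le_refl | exfalso; apply hnone; exists k; split; assumption].
Qed.

Lemma succ_or_max A x : finite_set A -> A x -> (exists s, succ_of A x s) \/ op_max lt A x.
Proof.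
  intros hA hx. destruct (classic (exists y, A y /\ x < y)) as [(y & hy & hxy) | hnone].
  - left. destruct (least_above A x y hA hy hxy) as (s & hs & hxs & hmin).
    exists s. repeat split; assumption.
  - right. assert (hle : forall y, A y -> y <= x).
    { intros y hy. apply not_lt_le. intro hxy. apply hnone. exists y. split; assumption. }
    split; [exists x; exact hle | split; assumption].
Qed.

Definition icc_family {K : Type} (L : list K) (lo hi : K -> T) (z : T) : Prop :=
  exists k, In k L /\ lo k <= z <= hi k.

Definition separated_family {K : Type} (L : list K) (lo hi : K -> T) : Prop :=
  (forall k, In k L -> lo k <= hi k) /\
  (forall k k', In k L -> In k' L ->
     (lo k = lo k' /\ hi k = hi k') \/ hi k < lo k' \/ hi k' < lo k).

Lemma fci_icc_family {K : Type} (L : list K) lo hi : fci lt (icc_family L lo hi).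
Proof.
  exists (map (fun k => Icc (lo k) (hi k)) L). intro z. split.
  - intros (k & hk & hz). exists (Icc (lo k) (hi k)). split; [exact (in_map _ _ _ hk) | exact hz].
  - intros (J & hJ & hz). apply in_map_iff in hJ. destruct hJ as (k & <- & hk).
    exists k. split; assumption.
Qed.

Lemma icc_family_incl {K : Type} (L L' : list K) lo hi z :
  incl L L' -> icc_family L lo hi z -> icc_family L' lo hi z.
Proof. intros hL (k & hk & hz). exists k. split; [exact (hL k hk) | exact hz]. Qed.

Lemma gap_above {K : Type} (L : list K) lo hi y p :
  (forall k, In k L -> hi k <= y \/ y < lo k) -> y < p ->
  exists g, y < g /\ g <= p /\ forall z, y < z -> z < g -> ~ icc_family L lo hi z.
Proof.
  intros hL hyp. induction L as [| k L IH].
  - exists p. split; [exact hyp | split; [apply le_refl |]]. intros z _ _ (k & [] & _).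
  - destruct IH as (g & hyg & hgp & hgap); [intros k' hk'; apply hL; now right |].
    assert (hg' : exists g', y < g' /\ g' <= g /\ (hi k <= y \/ g' <= lo k)).
    { destruct (hL k (or_introl eq_refl)) as [hk | hk]; [exists g; auto |].
      destruct (lt_trichotomy (lo k) g) as [h | [<- | h]];
        [exists (lo k) | exists (lo k) | exists g]; auto. }
    destruct hg' as (g' & hyg' & hg'g & hk).
    exists g'. split; [exact hyg' | split; [eauto using le_trans |]].
    intros z hyz hzg' (k' & [<- | hk'] & hlo & hhi).
    + destruct hk as [h | h].
      * exact (le_not_lt z y (le_trans _ _ _ hhi h) hyz).
      * exact (le_not_lt g' z (le_trans _ _ _ h hlo) hzg').
    + apply (hgap z hyz (lt_le_trans _ _ _ hzg' hg'g)). exists k'. auto.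
Qed.

Lemma gap_below {K : Type} (L : list K) lo hi y p :
  (forall k, In k L -> hi k < y \/ y <= lo k) -> p < y ->
  exists g, p <= g /\ g < y /\ forall z, g < z -> z < y -> ~ icc_family L lo hi z.
Proof.
  intros hL hpy. induction L as [| k L IH].
  - exists p. split; [apply le_refl | split; [exact hpy |]]. intros z _ _ (k & [] & _).
  - destruct IH as (g & hpg & hgy & hgap); [intros k' hk'; apply hL; now right |].
    assert (hg' : exists g', g <= g' /\ g' < y /\ (y <= lo k \/ hi k <= g')).
    { destruct (hL k (or_introl eq_refl)) as [hk | hk]; [| exists g; auto].
      destruct (lt_trichotomy g (hi k)) as [h | [<- | h]];
        [exists (hi k) | exists g | exists g]; auto. }
    destruct hg' as (g' & hgg' & hg'y & hk).
    exists g'. split; [eauto using le_trans | split; [exact hg'y |]].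
    intros z hg'z hzy (k' & [<- | hk'] & hlo & hhi).
    + destruct hk as [h | h].
      * exact (le_not_lt y z (le_trans _ _ _ h hlo) hzy).
      * exact (le_not_lt z g' (le_trans _ _ _ hhi h) hg'z).
    + apply (hgap z (le_lt_trans _ _ _ hgg' hg'z) hzy). exists k'. auto.
Qed.

(* Finitely many separated intervals leave an empty open interval beside each end,
   and density puts a point there. *)
Lemma separated_component {K : Type} (L : list K) lo hi k :
  separated_family L lo hi -> In k L -> component (icc_family L lo hi) (lo k) (hi k).
Proof.
  intros [hle hsep] hk.
  constructor; [exact (hle k hk) | intros z h1 h2; exists k; auto | |].
  - intros p hp hcov.
    destruct (gap_below L lo hi (lo k) p) as (g & hpg & hgy & hgap); [| exact hp |].
    + intros k' hk'. destruct (hsep k k' hk hk') as [[-> _] | [h | h]]; auto.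
      right. exact (lt_le _ _ (le_lt_trans _ _ _ (hle k hk) h)).
    + destruct (Hdense g (lo k) hgy) as (q & hgq & hqy).
      apply (hgap q hgq hqy), hcov; [exact (le_trans _ _ _ hpg (lt_le _ _ hgq)) | auto].
  - intros p hp hcov.
    destruct (gap_above L lo hi (hi k) p) as (g & hyg & hgp & hgap); [| exact hp |].
    + intros k' hk'. destruct (hsep k k' hk hk') as [[_ ->] | [h | h]]; auto.
      left. exact (lt_le _ _ (lt_le_trans _ _ _ h (hle k hk))).
    + destruct (Hdense (hi k) g hyg) as (q & hyq & hqg).
      apply (hgap q hyq hqg), hcov; [auto | exact (le_trans _ _ _ (lt_le _ _ hqg) hgp)].
Qed.

Lemma separated_op_l {K : Type} (L : list K) lo hi x : separated_family L lo hi ->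
  op_l lt (icc_family L lo hi) x <-> exists k, In k L /\ x = lo k.
Proof.
  intros hsep. split.
  - intros hx. destruct (proj1 (op_l_edge _ x hx)) as (k & hk & hxk).
    exists k. split; [exact hk |].
    apply (op_l_in_covers _ _ _ x (component_covers (separated_component L lo hi k hsep hk)));
      assumption.
  - intros (k & hk & ->). exact (component_op_l _ _ _ (separated_component L lo hi k hsep hk)).
Qed.

Lemma separated_op_r {K : Type} (L : list K) lo hi y : separated_family L lo hi ->
  op_r lt (icc_family L lo hi) y <-> exists k, In k L /\ y = hi k.
Proof.
  intros hsep. split.
  - intros hy. destruct (proj1 (op_r_edge _ y hy)) as (k & hk & hyk).
    exists k. split; [exact hk |].
    apply (op_r_in_covers _ _ _ y (component_covers (separated_component L lo hi k hsep hk)));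
      assumption.
  - intros (k & hk & ->). exact (component_op_r _ _ _ (separated_component L lo hi k hsep hk)).
Qed.

Local Set Implicit Arguments.
Record ips_certificate (A B C U V P Q : T -> Prop) : Prop := {
  A_eq : seteq A (op_cup (op_l lt U) (op_max lt A));
  UA_eq : seteq (op_cap U A) (op_l lt U);
  rUA_eq : seteq (op_cap (op_r lt U) A) op_bot;
  lV_eq : seteq (op_l lt V) (op_r lt U);
  VA_eq : seteq (op_cap V A) (op_r lt V);
  CA_eq : seteq (op_cap C A) C;
  lP_eq : seteq (op_l lt P) C;
  PU_eq : seteq (op_cap P U) P;
  rP_eq : seteq (op_r lt P) (op_l lt Q);
  QV_eq : seteq (op_cap Q V) Q;
  rQ_eq : seteq (op_r lt Q) (op_cap B (op_r lt V));
  rPU_eq : seteq (op_cap (op_r lt P) (op_r lt U)) (op_r lt P);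
  Cmax_eq : seteq (op_cap C (op_max lt A)) op_bot
}.
Local Unset Implicit Arguments.

Lemma sat_ips_formula env :
  sat_ex lt zero env ips_formula <->
  exists U V P Q, fci lt U /\ fci lt V /\ fci lt P /\ fci lt Q /\
    ips_certificate (env 0) (env 1) (env 2) U V P Q.
Proof.
  simpl. unfold update. simpl. split.
  - intros (U & hU & V & hV & P & hP & Q & hQ & h).
    exists U, V, P, Q. do 4 (split; [assumption |]). constructor; tauto.
  - intros (U & V & P & Q & hU & hV & hP & hQ & []).
    exists U. split; [exact hU |]. exists V. split; [exact hV |].
    exists P. split; [exact hP |]. exists Q. split; [exact hQ |].
    tauto.
Qed.

Section Certificate.
Variables A B C U V P Q : T -> Prop.
Hypothesis hA : finite_set A.
Hypothesis cert : ips_certificate A B C U V P Q.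

Lemma P_incl_U z : P z -> U z.
Proof. intros hz. exact (proj2 (proj2 (PU_eq cert z) hz)). Qed.

Lemma Q_incl_V z : Q z -> V z.
Proof. intros hz. exact (proj2 (proj2 (QV_eq cert z) hz)). Qed.

Lemma gap_structure a s : succ_of A a s ->
  exists y, a < y < s /\ component U a y /\ component V y s.
Proof.
  intros hs. pose proof hs as (ha & hsA & has & hmin).
  assert (hlU : op_l lt U a).
  { destruct (proj1 (A_eq cert a) ha) as [h | h]; [exact h |].
    exfalso. exact (succ_not_max A a s hs h). }
  assert (hnU : ~ covers U a s).
  { intro hcov.
    assert (hlUs : op_l lt U s) by (apply (UA_eq cert); split; [apply hcov; auto | exact hsA]).
    pose proof (op_l_in_covers U a s s hcov hlUs (conj (lt_le _ _ has) (le_refl s))) as e.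
    rewrite e in has. exact (lt_irrefl a has). }
  destruct (op_l_component U a s hlU hnU) as (y & hUy & hys).
  assert (hay : a < y).
  { destruct (component_le hUy) as [h | <-]; [exact h | exfalso].
    exact (proj1 (rUA_eq cert a) (conj (component_op_r U a a hUy) ha)). }
  assert (hrV : V s -> op_r lt V s) by (intros h; apply (VA_eq cert); split; assumption).
  destruct (Hnoright s) as (p & hsp).
  assert (hnV : ~ covers V y p).
  { intro hcov. assert (hrVs : op_r lt V s) by (apply hrV, hcov; auto).
    pose proof (op_r_in_covers V y p s hcov hrVs (conj (lt_le _ _ hys) (lt_le _ _ hsp))) as e.
    rewrite e in hsp. exact (lt_irrefl p hsp). }
  destruct (op_l_component V y p (proj2 (lV_eq cert y) (component_op_r U a y hUy)) hnV)
    as (z & hVz & _).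
  assert (hsz : s <= z).
  { apply hmin; [| exact (lt_le_trans _ _ _ hay (component_le hVz))].
    exact (proj2 (proj2 (VA_eq cert z) (component_op_r V y z hVz))). }
  assert (hrVs : op_r lt V s) by (apply hrV, (component_covers hVz); auto).
  pose proof (op_r_in_covers V y z s (component_covers hVz) hrVs (conj (lt_le _ _ hys) hsz)) as e.
  rewrite <- e in hVz. exists y. auto.
Qed.

Lemma C_incl_ips x : C x -> ips lt A B x.
Proof.
  intros hx.
  assert (hxA : A x) by exact (proj2 (proj2 (CA_eq cert x) hx)).
  destruct (succ_or_max A x hA hxA) as [(s & hs) | hmax];
    [| exfalso; exact (proj1 (Cmax_eq cert x) (conj hx hmax))].
  apply ips_succ. exists s. split; [exact hs |].
  destruct (gap_structure x s hs) as (y & [hxy hys] & hUy & hVy).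
  destruct (op_l_component P x s (proj2 (lP_eq cert x) hx)) as (w & hPw & _).
  { intro hcov. apply (component_right hUy s hys).
    intros z h1 h2. apply P_incl_U, hcov; eauto using le_trans. }
  assert (hrPw : op_r lt P w) by exact (component_op_r P x w hPw).
  assert (hwy : w = y).
  { apply (nested_component_right P U x w x y P_incl_U hPw hUy (conj (le_refl x) (lt_le _ _ hxy))).
    exact (proj2 (proj2 (rPU_eq cert w) hrPw)). }
  rewrite hwy in hrPw.
  destruct (Hnoright s) as (p & hsp).
  destruct (op_l_component Q y p (proj1 (rP_eq cert y) hrPw)) as (z & hQz & _).
  { intro hcov. apply (component_right hVy p hsp).
    intros z h1 h2. apply Q_incl_V, hcov; eauto using le_trans. }
  destruct (proj1 (rQ_eq cert z) (component_op_r Q y z hQz)) as [hBz hrVz].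
  rewrite <- (nested_component_right Q V y z y s Q_incl_V hQz hVy
                (conj (le_refl y) (lt_le _ _ hys)) hrVz).
  exact hBz.
Qed.

Lemma ips_incl_C x : ips lt A B x -> C x.
Proof.
  intros hx. apply ips_succ in hx. destruct hx as (j & hj & hBj).
  destruct (gap_structure x j hj) as (y & [hxy hyj] & hUy & hVy).
  assert (hrQ : op_r lt Q j).
  { apply (rQ_eq cert). split; [exact hBj | exact (component_op_r V y j hVy)]. }
  destruct (op_r_component Q j hrQ) as (w & hQw).
  assert (hrPw : op_r lt P w) by exact (proj2 (rP_eq cert w) (component_op_l Q w j hQw)).
  assert (hwy : w = y).
  { apply (nested_component_left Q V w j y j Q_incl_V hQw hVy (conj (lt_le _ _ hyj) (le_refl j))).
    apply (lV_eq cert). exact (proj2 (proj2 (rPU_eq cert w) hrPw)). }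
  rewrite hwy in hrPw.
  destruct (op_r_component P y hrPw) as (v & hPv).
  assert (hCv : C v) by exact (proj1 (lP_eq cert v) (component_op_l P v y hPv)).
  assert (hlUv : op_l lt U v).
  { apply (UA_eq cert). split; [| exact (proj2 (proj2 (CA_eq cert v) hCv))].
    apply P_incl_U, (component_covers hPv); [apply le_refl | exact (component_le hPv)]. }
  rewrite <- (nested_component_left P U v y x y P_incl_U hPv hUy
                (conj (lt_le _ _ hxy) (le_refl y)) hlUv).
  exact hCv.
Qed.

Lemma ips_eq_of_certificate : seteq (ips lt A B) C.
Proof. intro x. split; [apply ips_incl_C | apply C_incl_ips]. Qed.

End Certificate.

Definition midpoint (k : T * T) : T := epsilon (inhabits zero) (fun z => fst k < z < snd k).

Lemma midpoint_between k : fst k < snd k -> fst k < midpoint k < snd k.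
Proof.
  intros h. exact (epsilon_spec (inhabits zero) (fun z => fst k < z < snd k) (Hdense _ _ h)).
Qed.

Section SuccessorPairs.
Variables (A : T -> Prop) (L : list (T * T)).
Hypothesis hL : forall k, In k L -> succ_of A (fst k) (snd k).

Lemma midpoint_in_pair k : In k L -> fst k < midpoint k < snd k.
Proof. intros hk. exact (midpoint_between k (succ_of_lt _ _ _ (hL k hk))). Qed.

Lemma separated_lower : separated_family L fst midpoint.
Proof.
  split.
  - intros k hk. exact (lt_le _ _ (proj1 (midpoint_in_pair k hk))).
  - intros k k' hk hk'.
    destruct (succ_of_sep _ _ _ _ _ (hL k hk) (hL k' hk')) as [[e1 e2] | [h | h]].
    + left. split; [exact e1 | unfold midpoint; rewrite e1, e2; reflexivity].
    + right; left. exact (lt_le_trans _ _ _ (proj2 (midpoint_in_pair k hk)) h).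
    + right; right. exact (lt_le_trans _ _ _ (proj2 (midpoint_in_pair k' hk')) h).
Qed.

Lemma separated_upper : separated_family L midpoint snd.
Proof.
  split.
  - intros k hk. exact (lt_le _ _ (proj2 (midpoint_in_pair k hk))).
  - intros k k' hk hk'.
    destruct (succ_of_sep _ _ _ _ _ (hL k hk) (hL k' hk')) as [[e1 e2] | [h | h]].
    + left. split; [unfold midpoint; rewrite e1, e2; reflexivity | exact e2].
    + right; left. exact (le_lt_trans _ _ _ h (proj1 (midpoint_in_pair k' hk'))).
    + right; right. exact (le_lt_trans _ _ _ h (proj1 (midpoint_in_pair k hk))).
Qed.

Lemma lower_fst k : In k L -> icc_family L fst midpoint (fst k).
Proof.
  intros hk. exists k.
  split; [exact hk | split; [apply le_refl | exact (lt_le _ _ (proj1 (midpoint_in_pair k hk)))]].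
Qed.

Lemma upper_snd k : In k L -> icc_family L midpoint snd (snd k).
Proof.
  intros hk. exists k.
  split; [exact hk | split; [exact (lt_le _ _ (proj2 (midpoint_in_pair k hk))) | apply le_refl]].
Qed.

Lemma lower_inter_A x : icc_family L fst midpoint x -> A x -> exists k, In k L /\ x = fst k.
Proof.
  intros (k & hk & hkx & hxm) hx. exists k. split; [exact hk |].
  apply (succ_of_eq_left A _ _ x (hL k hk) hx hkx).
  exact (le_lt_trans _ _ _ hxm (proj2 (midpoint_in_pair k hk))).
Qed.

Lemma upper_inter_A x : icc_family L midpoint snd x -> A x -> exists k, In k L /\ x = snd k.
Proof.
  intros (k & hk & hmx & hxs) hx. exists k. split; [exact hk |].
  apply (succ_of_eq_right A _ _ x (hL k hk) hx); [| exact hxs].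
  exact (lt_le_trans _ _ _ (proj1 (midpoint_in_pair k hk)) hmx).
Qed.

Lemma midpoint_notin_A k : In k L -> ~ A (midpoint k).
Proof.
  intros hk hm. destruct (midpoint_in_pair k hk) as [h1 h2].
  rewrite (succ_of_eq_left A _ _ _ (hL k hk) hm (lt_le _ _ h1) h2) in h1.
  exact (lt_irrefl _ h1).
Qed.

Lemma op_l_lower x : op_l lt (icc_family L fst midpoint) x <-> exists k, In k L /\ x = fst k.
Proof. exact (separated_op_l L _ _ x separated_lower). Qed.

Lemma op_r_lower x : op_r lt (icc_family L fst midpoint) x <-> exists k, In k L /\ x = midpoint k.
Proof. exact (separated_op_r L _ _ x separated_lower). Qed.

Lemma op_l_upper x : op_l lt (icc_family L midpoint snd) x <-> exists k, In k L /\ x = midpoint k.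
Proof. exact (separated_op_l L _ _ x separated_upper). Qed.

Lemma op_r_upper x : op_r lt (icc_family L midpoint snd) x <-> exists k, In k L /\ x = snd k.
Proof. exact (separated_op_r L _ _ x separated_upper). Qed.

End SuccessorPairs.

Section Witness.
Variables (A B C : T -> Prop) (LA LB : list (T * T)).
Hypothesis hA : finite_set A.
Hypothesis hC : seteq (ips lt A B) C.
Hypothesis hLA : forall k, In k LA <-> succ_of A (fst k) (snd k).
Hypothesis hLB : forall k, In k LB <-> In k LA /\ B (snd k).

Lemma LA_succ k : In k LA -> succ_of A (fst k) (snd k).
Proof. apply hLA. Qed.

Lemma LB_incl : incl LB LA.
Proof. intros k hk. apply hLB, hk. Qed.

Lemma LB_succ k : In k LB -> succ_of A (fst k) (snd k).
Proof. intros hk. apply LA_succ, LB_incl, hk. Qed.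

Lemma certificate_of_ips :
  ips_certificate A B C (icc_family LA fst midpoint) (icc_family LA midpoint snd)
                        (icc_family LB fst midpoint) (icc_family LB midpoint snd).
Proof.
  constructor; intro x; unfold op_cup, op_cap, op_bot.
  - rewrite (op_l_lower A LA LA_succ). split.
    + intros hx. destruct (succ_or_max A x hA hx) as [(s & hs) | hmax]; [left | right; exact hmax].
      exists (x, s). split; [apply hLA, hs | reflexivity].
    + intros [(k & hk & ->) | (_ & hx & _)]; [exact (proj1 (LA_succ k hk)) | exact hx].
  - rewrite (op_l_lower A LA LA_succ). split.
    + intros [hx hxA]. exact (lower_inter_A A LA LA_succ x hx hxA).
    + intros (k & hk & ->).
      split; [exact (lower_fst A LA LA_succ k hk) | exact (proj1 (LA_succ k hk))].
  - rewrite (op_r_lower A LA LA_succ). split; [| intros []].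
    intros ((k & hk & ->) & hx). exact (midpoint_notin_A A LA LA_succ k hk hx).
  - rewrite (op_l_upper A LA LA_succ), (op_r_lower A LA LA_succ). reflexivity.
  - rewrite (op_r_upper A LA LA_succ). split.
    + intros [hx hxA]. exact (upper_inter_A A LA LA_succ x hx hxA).
    + intros (k & hk & ->).
      split; [exact (upper_snd A LA LA_succ k hk) | exact (proj1 (proj2 (LA_succ k hk)))].
  - split; [intros [hx _]; exact hx |].
    intros hx. split; [exact hx | exact (proj1 (proj2 (hC x) hx))].
  - rewrite (op_l_lower A LB LB_succ), <- (hC x), ips_succ. split.
    + intros (k & hk & ->). exists (snd k). apply hLB in hk. destruct hk as [hk hB].
      split; [apply hLA, hk | exact hB].
    + intros (s & hs & hB). exists (x, s). split; [apply hLB; split; [apply hLA, hs | exact hB] |].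
      reflexivity.
  - split; [intros [hx _]; exact hx |].
    intros hx. split; [exact hx | exact (icc_family_incl LB LA _ _ x LB_incl hx)].
  - rewrite (op_r_lower A LB LB_succ), (op_l_upper A LB LB_succ). reflexivity.
  - split; [intros [hx _]; exact hx |].
    intros hx. split; [exact hx | exact (icc_family_incl LB LA _ _ x LB_incl hx)].
  - rewrite (op_r_upper A LB LB_succ), (op_r_upper A LA LA_succ). split.
    + intros (k & hk & ->). apply hLB in hk. destruct hk as [hk hB].
      split; [exact hB | exists k; split; [exact hk | reflexivity]].
    + intros (hB & k & hk & ->). exists k. split; [apply hLB; split; assumption | reflexivity].
  - rewrite (op_r_lower A LB LB_succ), (op_r_lower A LA LA_succ).
    split; [intros [hx _]; exact hx |].
    intros hx. split; [exact hx |]. destruct hx as (k & hk & ->).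
    exists k. split; [exact (LB_incl k hk) | reflexivity].
  - split; [| intros []]. intros [hx hmax].
    apply hC, ips_succ in hx. destruct hx as (s & hs & _).
    exact (succ_not_max A x s hs hmax).
Qed.

End Witness.

Lemma certificate_exists A B C : finite_set A -> seteq (ips lt A B) C ->
  exists U V P Q, fci lt U /\ fci lt V /\ fci lt P /\ fci lt Q /\
    ips_certificate A B C U V P Q.
Proof.
  intros hA hC. pose proof hA as [l hl].
  destruct (exists_filter (list_prod l l) (fun k => succ_of A (fst k) (snd k))) as [LA hLA].
  destruct (exists_filter LA (fun k => B (snd k))) as [LB hLB].
  assert (hLA' : forall k, In k LA <-> succ_of A (fst k) (snd k)).
  { intros [a s]. rewrite hLA, in_prod_iff, <- !hl. simpl.
    split; [tauto |]. intros hs. pose proof hs as (ha & hs' & _). tauto. }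
  exists (icc_family LA fst midpoint), (icc_family LA midpoint snd),
         (icc_family LB fst midpoint), (icc_family LB midpoint snd).
  do 4 (split; [apply fci_icc_family |]).
  exact (certificate_of_ips A B C LA LB hA hC hLA' hLB).
Qed.

End DenseOrder.

Theorem corollary5p5 (T : Type) (lt : T -> T -> Prop) (zero : T)
  (Hord : strict_total_order lt) (Hdense : dense_order lt)
  (Hzero : least_element lt zero) (Hnoright : no_right_endpoint lt) :
  exists phi : exformula,
    forall A B C : T -> Prop,
      finite_set A -> finite_set B -> finite_set C ->
      forall env : nat -> T -> Prop,
        (forall n, fci lt (env n)) ->
        env 0 = A -> env 1 = B -> env 2 = C ->
        (sat_ex lt zero env phi <-> seteq (ips lt A B) C).
Proof.
  exists ips_formula. intros A B C hA _ _ env _ h0 h1 h2.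
  rewrite (sat_ips_formula lt zero env), h0, h1, h2. split.
  - intros (U & V & P & Q & _ & _ & _ & _ & cert).
    exact (ips_eq_of_certificate lt zero Hord Hdense Hzero Hnoright A B C U V P Q hA cert).
  - exact (certificate_exists lt zero Hord Hdense Hzero Hnoright A B C hA).
Qed.
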